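(* Let $P$ be a simple product rule with parameters $\alpha,\beta,\gamma\in\mathbb Q$ (so $P\approx\alpha xy+\beta(x\dot y+\dot xy)+\gamma\dot x\dot y$ and $\alpha\gamma=\beta(\beta-1)$), and let $*$ be the $P$-product. Then there exists a series $\mathbb 1$ with $f*\mathbb 1=\mathbb 1*f=f$ for all series $f$ if and only if $(\beta,\gamma)\neq(0,0)$. Moreover, when $(\beta,\gamma)\neq(0,0)$ there is $\eta\in\mathbb Q$ such that the unique series $\mathbb 1$ with $\mathbb 1_\varepsilon=1$ and $\delta_a\mathbb 1=\eta\cdot\mathbb 1$ for all $a\in\Sigma$ is such a multiplicative identity.
   Context: Let $\Sigma$ be a finite alphabet, $\Sigma^*$ the set of finite words with empty word $\varepsilon$. A series is a function $f:\Sigma^*\to\mathbb Q$; write $f_w=f(w)$; series form a $\mathbb Q$-vector space under pointwise operations. For $a\in\Sigma$ the left derivative $\delta_af$ is the series $w\mapsto f(aw)$. Terms over variables $X$: generated by $u,v::=x\mid 0\mid c\cdot u\mid u+v\mid u*v$ ($c\in\mathbb Q$); $uv$ abbreviates $u*v$. A product rule is a term $P$ over $\{x,\dot x,y,\dot y\}$. The $P$-product $*$ of series and the semantics $[\![u]\!]_\varrho$ of terms under valuations $\varrho:X\to$ series are the unique pair with $(f*g)_\varepsilon=f_\varepsilon g_\varepsilon$, $\delta_a(f*g)=[\![P]\!]_{[x\mapsto f,\dot x\mapsto\delta_af,y\mapsto g,\dot y\mapsto\delta_ag]}$, and $[\![\cdot]\!]_\varrho$ interpreting variables by $\varrho$ and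 $0,c\cdot,+,*$ by the zero series, scalar multiplication, addition and $*$. $u\approx v$ means $u,v$ denote the same commutative polynomial. $P$ is simple if there are $\alpha,\beta,\gamma\in\mathbb Q$ with $\alpha\gamma=\beta(\beta-1)$ and $P\approx\alpha xy+\beta(x\dot y+\dot xy)+\gamma\dot x\dot y$. *)

From HB Require Import structures.
From mathcomp Require Import all_boot all_order all_algebra.
From mathcomp Require Import mpoly.
Set Implicit Arguments. Unset Strict Implicit. Unset Printing Implicit Defensive.
Import Order.TTheory GRing.Theory Num.Theory.
Local Open Scope ring_scope.

Definition series (Sigma : Type) := seq Sigma -> rat.

Definition delta (Sigma : Type) (a : Sigma) (f : series Sigma) : series Sigma :=
  fun w => f (a :: w).

Definition szero (Sigma : Type) : series Sigma := fun _ => 0.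
Definition sscale (Sigma : Type) (c : rat) (f : series Sigma) : series Sigma :=
  fun w => c * f w.
Definition sadd (Sigma : Type) (f g : series Sigma) : series Sigma :=
  fun w => f w + g w.

Inductive term (X : Type) : Type :=
| TVar of X
| TZero
| TScale of rat & term X
| TAdd of term X & term X
| TMul of term X & term X.
Arguments TZero {X}.

Fixpoint eval_term (Sigma X : Type) (m : series Sigma -> series Sigma -> series Sigma)
  (rho : X -> series Sigma) (u : term X) : series Sigma :=
  match u with
  | TVar x => rho x
  | TZero => @szero Sigma
  | TScale c u => sscale c (eval_term m rho u)
  | TAdd u v => sadd (eval_term m rho u) (eval_term m rho v)
  | TMul u v => m (eval_term m rho u) (eval_term m rho v)
  end.

Inductive pvar : Type := vx | vdx | vy | vdy.

Definition prule := term pvar.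

Definition pval (Sigma : Type) (f df g dg : series Sigma) (v : pvar) : series Sigma :=
  match v with vx => f | vdx => df | vy => g | vdy => dg end.

(* [prod_trunc P n f g] agrees with the P-product f*g on all words of length < n.
   It is defined by recursion on n, following the defining equations
   (f*g)_eps = f_eps g_eps and
   delta_a (f*g) = [[P]]_[x:=f, xdot:=delta_a f, y:=g, ydot:=delta_a g]. *)
Fixpoint prod_trunc (Sigma : Type) (P : prule) (n : nat) (f g : series Sigma) : series Sigma :=
  match n with
  | 0 => fun _ => f [::] * g [::]
  | n'.+1 => fun w =>
      match w with
      | [::] => f [::] * g [::]
      | a :: w' =>
          eval_term (prod_trunc P n') (pval f (delta a f) g (delta a g)) P w'
      end
  end.

Definition pprod (Sigma : Type) (P : prule) (f g : series Sigma) : series Sigma :=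
  fun w => prod_trunc P (size w).+1 f g w.

Definition pvar_idx (v : pvar) : 'I_4 :=
  match v with
  | vx => inord 0 | vdx => inord 1 | vy => inord 2 | vdy => inord 3
  end.

Fixpoint poly_of (u : prule) : {mpoly rat[4]} :=
  match u with
  | TVar v => 'X_(pvar_idx v)
  | TZero => 0
  | TScale c u => c *: poly_of u
  | TAdd u v => poly_of u + poly_of v
  | TMul u v => poly_of u * poly_of v
  end.

Definition approx (u v : prule) : Prop := poly_of u = poly_of v.

Definition simple_form (alpha beta gamma : rat) : prule :=
  TAdd (TAdd (TScale alpha (TMul (TVar vx) (TVar vy)))
             (TScale beta (TAdd (TMul (TVar vx) (TVar vdy)) (TMul (TVar vdx) (TVar vy)))))
       (TScale gamma (TMul (TVar vdx) (TVar vdy))).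

Definition simple_with (P : prule) (alpha beta gamma : rat) : Prop :=
  alpha * gamma = beta * (beta - 1) /\ approx P (simple_form alpha beta gamma).

Definition is_unit_for (Sigma : Type) (P : prule) (one : series Sigma) : Prop :=
  forall f : series Sigma, pprod P f one =1 f /\ pprod P one f =1 f.

From HB Require Import structures.
From mathcomp Require Import all_boot all_order all_algebra.
From mathcomp Require Import mpoly.
From mathcomp Require Import ring.
Set Implicit Arguments. Unset Strict Implicit. Unset Printing Implicit Defensive.
Import Order.TTheory GRing.Theory Num.Theory.
Local Open Scope ring_scope.

(* With [A C = B (B - 1)], the product defined by
   [d_a (f * g) = A f g + B (f d_a g + d_a f g) + C d_a f d_a g] is carried to the
   pointwise product by [f |-> (w |-> (T_(a_n) ... T_(a_1) f) eps)], where
   [T_a f = C d_a f + B f].  For [C != 0] this map is injective, so the product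
   behaves like a commutative ring product and a term's value only depends on its
   polynomial; in particular every simple rule [P] gives this explicit product.
   The case [C = 0] is reduced to [C != 0] by deforming the parameters to
   [(alpha, beta + alpha X, gamma + (2 beta - 1) X + alpha X^2)] over [R[X]] and
   evaluating at [X = 0].  For the explicit product, the series [w |-> eta^|w|] is
   neutral once [alpha + beta eta = 0] and [beta + gamma eta = 1], which is
   solvable iff [(beta, gamma) != (0, 0)]; if [beta = gamma = 0] then
   [(f * g)_a = alpha f_eps g_eps], so nothing is a right unit. *)

Definition lderiv (S T : Type) (a : S) (f : seq S -> T) : seq S -> T :=
  fun w => f (a :: w).

Definition eq_upto (S T : Type) (n : nat) (f g : seq S -> T) : Prop :=
  forall v, (size v <= n)%N -> f v = g v.

Lemma eq_upto_le (S T : Type) (m n : nat) (f g : seq S -> T) :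
  (m <= n)%N -> eq_upto n f g -> eq_upto m f g.
Proof. by move=> le_mn Efg v Hv; apply: Efg; apply: leq_trans le_mn. Qed.

Lemma eq_upto_lderiv (S T : Type) (n : nat) (a : S) (f g : seq S -> T) :
  eq_upto n.+1 f g -> eq_upto n (lderiv a f) (lderiv a g).
Proof. by move=> Efg v Hv; apply: Efg. Qed.

Section SimpleProduct.
Variables (S : Type) (R : comNzRingType) (A B C : R).
Implicit Types (f g : seq S -> R) (w : seq S).

Fixpoint simple_prod f g w {struct w} : R :=
  match w with
  | [::] => f [::] * g [::]
  | a :: w' => A * simple_prod f g w'
      + B * (simple_prod f (lderiv a g) w' + simple_prod (lderiv a f) g w')
      + C * simple_prod (lderiv a f) (lderiv a g) w'
  end.

Lemma simple_prod_local w f f' g g' :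
  eq_upto (size w) f f' -> eq_upto (size w) g g' ->
  simple_prod f g w = simple_prod f' g' w.
Proof.
elim: w f f' g g' => [|a w IH] f f' g g' Ef Eg /=; first by rewrite Ef ?Eg.
have Ef0 := eq_upto_le (leqnSn _) Ef; have Eg0 := eq_upto_le (leqnSn _) Eg.
have Efa := eq_upto_lderiv a Ef; have Ega := eq_upto_lderiv a Eg.
by rewrite (IH _ _ _ _ Ef0 Eg0) (IH _ _ _ _ Ef0 Ega) (IH _ _ _ _ Efa Eg0)
  (IH _ _ _ _ Efa Ega).
Qed.

Lemma eq_upto_simple_prod n f f' g g' :
  eq_upto n f f' -> eq_upto n g g' -> eq_upto n (simple_prod f g) (simple_prod f' g').
Proof. by move=> Ef Eg v Hv; apply: simple_prod_local; apply: eq_upto_le Hv _. Qed.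

Lemma eq_simple_prod f f' g g' :
  f =1 f' -> g =1 g' -> simple_prod f g =1 simple_prod f' g'.
Proof. by move=> Ef Eg w; apply: simple_prod_local => v _; [apply: Ef | apply: Eg]. Qed.

Lemma simple_prodZl c f g w : simple_prod (fun v => c * f v) g w = c * simple_prod f g w.
Proof. by elim: w f g => [|a w IH] f g /=; rewrite ?IH /lderiv; ring. Qed.

Lemma simple_prodZr c f g w : simple_prod f (fun v => c * g v) w = c * simple_prod f g w.
Proof. by elim: w f g => [|a w IH] f g /=; rewrite ?IH /lderiv; ring. Qed.

Lemma simple_prod_geometric_unit (eta : R) (one : seq S -> R) :
  A + B * eta = 0 -> B + C * eta = 1 -> one [::] = 1 ->
  (forall a, lderiv a one =1 (fun w => eta * one w)) ->
  forall f, simple_prod f one =1 f /\ simple_prod one f =1 f.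
Proof.
move=> H1 H2 one0 Done.
suff unit_at w f : simple_prod f one w = f w /\ simple_prod one f w = f w.
  by move=> f; split=> w; case: (unit_at w f).
elim: w f => [|a w IH] f /=.
  by rewrite one0 mulr1 mul1r.
have E x y : A * x + B * (eta * x) + (B + C * eta) * y = y.
  by rewrite mulrA -mulrDl H1 H2 mul0r mul1r add0r.
have Ea := Done a.
rewrite (eq_simple_prod (frefl f) Ea) (eq_simple_prod (frefl (lderiv a f)) Ea).
rewrite (eq_simple_prod Ea (frefl f)) (eq_simple_prod Ea (frefl (lderiv a f))).
rewrite !(simple_prodZl, simple_prodZr) !(proj1 (IH _), proj2 (IH _)) /lderiv.
by split; rewrite -[RHS](E (f w) (f (a :: w))); ring.
Qed.

Lemma simple_prod_no_right_unit (a : S) (one : seq S -> R) :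
  B = 0 -> C = 0 -> ~ (forall f, simple_prod f one =1 f).
Proof.
move=> B0 C0 /(_ (fun w => if w is [::] then 0 else 1) [:: a]).
by rewrite /= B0 C0 !mul0r mulr0 !addr0 => /eqP; rewrite eq_sym oner_eq0.
Qed.

End SimpleProduct.

Lemma simple_prod_morph (S : Type) (R T : comNzRingType) (phi : {rmorphism R -> T})
    (A B C : R) (f g : seq S -> R) w :
  phi (simple_prod A B C f g w)
  = simple_prod (phi A) (phi B) (phi C) (phi \o f) (phi \o g) w.
Proof.
elim: w f g => [|a w IH] f g /=; first exact: rmorphM.
by rewrite !(rmorphD, rmorphM, IH).
Qed.

Section Transform.
Variables (S : Type) (R : comNzRingType) (B C : R).
Implicit Types (f g : seq S -> R) (w : seq S).

Definition twist (a : S) f : seq S -> R := fun v => C * f (a :: v) + B * f v.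

Fixpoint transform w f : R :=
  match w with
  | [::] => f [::]
  | a :: w' => transform w' (twist a f)
  end.

Lemma eq_transform w f f' : f =1 f' -> transform w f = transform w f'.
Proof.
elim: w f f' => [|a w IH] f f' Ef /=; first exact: Ef.
by apply: IH => v; rewrite /twist !Ef.
Qed.

Lemma transformD w f g :
  transform w (fun v => f v + g v) = transform w f + transform w g.
Proof.
elim: w f g => [|a w IH] f g //=; rewrite -IH.
by apply: eq_transform => v; rewrite /twist; ring.
Qed.

Lemma transformZ w c f : transform w (fun v => c * f v) = c * transform w f.
Proof.
elim: w f => [|a w IH] f //=; rewrite -IH.
by apply: eq_transform => v; rewrite /twist; ring.
Qed.

Lemma transform0 w : transform w (fun _ => 0) = 0.
Proof. by have := transformZ w 0 (fun _ => 0); rewrite !mul0r. Qed.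

Lemma transform_simple_prod (A : R) : A * C = B * (B - 1) ->
  forall w f g, transform w (simple_prod A B C f g) = transform w f * transform w g.
Proof.
move=> Hrel w; elim: w => [|a w IH] f g //=.
rewrite (@eq_transform _ _ (fun v => (A * C + B) * simple_prod A B C f g v
    + ((C * B) * simple_prod A B C f (lderiv a g) v
       + (C * B) * simple_prod A B C (lderiv a f) g v)
    + (C * C) * simple_prod A B C (lderiv a f) (lderiv a g) v)); last first.
  by move=> v; rewrite /twist /=; ring.
rewrite /twist !(transformD, transformZ) !IH Hrel.
by rewrite /lderiv; ring.
Qed.

End Transform.

Lemma transform_inj (S : Type) (R : idomainType) (B C : R) (f g : seq S -> R) :
  C != 0 -> (forall w, transform B C w f = transform B C w g) -> f =1 g.
Proof.
move=> C_neq0 Efg w; elim: w f g Efg => [|a w IH] f g Efg; first exact: (Efg [::]).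
have Etw : twist B C a f w = twist B C a g w by apply: IH => v; apply: (Efg (a :: v)).
by move: Etw; rewrite /twist (IH f g Efg) => /addIr /(mulfI C_neq0).
Qed.

Fixpoint eval_termR (S : Type) (R : nzRingType) (s : rat -> R)
    (m : (seq S -> R) -> (seq S -> R) -> seq S -> R)
    (rho : pvar -> seq S -> R) (u : prule) : seq S -> R :=
  match u with
  | TVar x => rho x
  | TZero => fun _ => 0
  | TScale c u => fun w => s c * eval_termR s m rho u w
  | TAdd u v => fun w => eval_termR s m rho u w + eval_termR s m rho v w
  | TMul u v => m (eval_termR s m rho u) (eval_termR s m rho v)
  end.

Lemma eval_termE (S : Type) m rho (u : prule) :
  eval_term m rho u = eval_termR (fun c : rat => c) m rho u :> (seq S -> rat).
Proof. by elim: u => //= [c u -> | u -> v -> | u -> v ->]. Qed.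

Lemma eval_termR_local (S : Type) (R : nzRingType) (s : rat -> R) m1 m2 rho
    (u : prule) n :
  (forall f g, eq_upto n (m1 f g) (m2 f g)) ->
  (forall f f' g g', eq_upto n f f' -> eq_upto n g g' -> eq_upto n (m2 f g) (m2 f' g')) ->
  eq_upto n (eval_termR s m1 rho u) (eval_termR (S := S) s m2 rho u).
Proof.
move=> E12 E2; elim: u => [x||c u IH|u IHu v IHv|u IHu v IHv] w Hw //=.
- by rewrite IH.
- by rewrite IHu ?IHv.
- by rewrite E12 //; apply: E2.
Qed.

Lemma eval_termR_morph (S : Type) (R T : comNzRingType) (phi : {rmorphism R -> T})
    (sR : rat -> R) (sT : rat -> T) (A B C : R) rhoR rhoT (u : prule) (w : seq S) :
  (forall c, phi (sR c) = sT c) -> (forall x v, phi (rhoR x v) = rhoT x v) ->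
  phi (eval_termR sR (simple_prod A B C) rhoR u w)
  = eval_termR sT (simple_prod (phi A) (phi B) (phi C)) rhoT u w.
Proof.
move=> Es Erho; elim: u w => [x||c u IH|u IHu v IHv|u IHu v IHv] w /=.
- exact: Erho.
- exact: rmorph0.
- by rewrite rmorphM Es IH.
- by rewrite rmorphD IHu IHv.
- by rewrite simple_prod_morph; apply: eq_simple_prod.
Qed.

Definition pvar_of_idx (i : 'I_4) : pvar :=
  match val i with 0 => vx | 1 => vdx | 2 => vy | _ => vdy end.

Lemma pvar_idxK : cancel pvar_idx pvar_of_idx.
Proof. by case; rewrite /pvar_of_idx /= inordK. Qed.

Lemma transform_eval_termR (S : Type) (R : comNzRingType) (s : {rmorphism rat -> R})
    (A B C : R) : A * C = B * (B - 1) -> forall rho (u : prule) (w : seq S),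
  transform B C w (eval_termR s (simple_prod A B C) rho u)
  = mmap s (fun i => transform B C w (rho (pvar_of_idx i))) (poly_of u).
Proof.
move=> Hrel rho u w; elim: u => [x||c u IH|u IHu v IHv|u IHu v IHv] /=.
- by rewrite mmapX mmap1U pvar_idxK.
- by rewrite transform0 rmorph0.
- by rewrite transformZ IH mmapZ.
- by rewrite transformD IHu IHv rmorphD.
- by rewrite transform_simple_prod // IHu IHv rmorphM.
Qed.

Lemma eval_termR_approx (S : Type) (R : idomainType) (s : {rmorphism rat -> R})
    (A B C : R) :
  A * C = B * (B - 1) -> C != 0 -> forall rho (u v : prule), approx u v ->
  eval_termR s (simple_prod A B C) rho u
  =1 eval_termR (S := S) s (simple_prod A B C) rho v.
Proof.
move=> Hrel C_neq0 rho u v Euv; apply: (transform_inj (B := B) C_neq0) => w.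
by rewrite !transform_eval_termR // Euv.
Qed.

Lemma simple_deformation (R : idomainType) (alpha beta gamma : R) :
  alpha * gamma = beta * (beta - 1) ->
  exists A B C : {poly R},
    [/\ A * C = B * (B - 1), C != 0, A.[0] = alpha, B.[0] = beta & C.[0] = gamma].
Proof.
move=> Hrel; pose A := alpha%:P; pose B := beta%:P + alpha%:P * 'X.
pose C := gamma%:P + (2 * beta - 1)%:P * 'X + alpha%:P * 'X * 'X.
exists A, B, C; split; rewrite ?hornerE ?mulr0 ?addr0 //.
- have E : A * C - B * (B - 1) = (alpha * gamma - beta * (beta - 1))%:P.
    rewrite /A /B /C; ring.
  by apply/eqP; rewrite -subr_eq0 E Hrel subrr.
- apply/eqP=> HC.
  have coef_eq0 i : C`_i = 0 by rewrite HC coef0.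
  move: (coef_eq0 2) (coef_eq0 1) (coef_eq0 0).
  rewrite /C !coefE /= !(mulr0, mulr1, addr0, add0r) => alpha0 beta_half gamma0.
  have : (2 * beta - 1) ^+ 2 - 4 * (beta * (beta - 1)) = 1 by ring.
  rewrite beta_half -Hrel alpha0 mul0r mulr0 expr0n subrr => /eqP.
  by rewrite eq_sym oner_eq0.
Qed.

Lemma eval_termR_simple_approx (S : Type) (alpha beta gamma : rat) :
  alpha * gamma = beta * (beta - 1) -> forall rho (u v : prule), approx u v ->
  eval_termR id (simple_prod alpha beta gamma) rho u
  =1 eval_termR (S := S) id (simple_prod alpha beta gamma) rho v.
Proof.
move=> Hrel rho u v Euv w.
have [A [B [C [HrelP C_neq0 A0 B0 C0]]]] := simple_deformation Hrel.
pose rhoP x v := (rho x v)%:P.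
have at0 t : eval_termR id (simple_prod alpha beta gamma) rho t w
    = horner_eval 0 (eval_termR polyC (simple_prod A B C) rhoP t w).
  rewrite -A0 -B0 -C0; symmetry.
  exact: (eval_termR_morph (phi := horner_eval 0) A B C t w (fun c => hornerC c 0)
    (fun x v => hornerC (rho x v) 0)).
by rewrite !at0 (eval_termR_approx polyC HrelP C_neq0 rhoP Euv).
Qed.

Lemma prod_trunc_simple (S : Type) (P : prule) (alpha beta gamma : rat) :
  simple_with P alpha beta gamma -> forall n (f g : series S) v,
  (size v < n)%N -> prod_trunc P n f g v = simple_prod alpha beta gamma f g v.
Proof.
move=> [Hrel HP]; elim=> [|n IH] f g [|a w] //= Hw.
rewrite eval_termE.
rewrite (@eval_termR_local _ _ _ _ (simple_prod alpha beta gamma) _ _ (size w)) //.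
- by rewrite (eval_termR_simple_approx Hrel _ HP).
- by move=> f1 g1 v Hv; apply: IH; apply: leq_ltn_trans Hv Hw.
- by move=> *; apply: eq_upto_simple_prod.
Qed.

Lemma pprod_simple (S : Type) (P : prule) (alpha beta gamma : rat) :
  simple_with P alpha beta gamma -> forall f g : series S,
  pprod P f g =1 simple_prod alpha beta gamma f g.
Proof. by move=> HP f g w; rewrite /pprod (prod_trunc_simple HP). Qed.

Lemma simple_unit_param (F : fieldType) (alpha beta gamma : F) :
  alpha * gamma = beta * (beta - 1) -> (beta, gamma) != (0, 0) ->
  exists eta, alpha + beta * eta = 0 /\ beta + gamma * eta = 1.
Proof.
move=> Hrel nondeg; have [gamma0 | gamma_neq0] := eqVneq gamma 0; last first.
  exists ((1 - beta) / gamma); split; last by field.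
  by apply: (mulIf gamma_neq0); rewrite mul0r mulrDl Hrel; field.
have beta1 : beta = 1.
  move: Hrel; rewrite gamma0 mulr0 => /esym/eqP; rewrite mulf_eq0 subr_eq0.
  case/orP=> /eqP // beta0; by rewrite beta0 gamma0 eqxx in nondeg.
by exists (- alpha); rewrite beta1 gamma0; split; ring.
Qed.

Lemma pprod_geometric_unit (S : Type) (P : prule) (alpha beta gamma eta : rat) :
  simple_with P alpha beta gamma ->
  alpha + beta * eta = 0 -> beta + gamma * eta = 1 ->
  forall one : series S, one [::] = 1 ->
  (forall a, delta a one =1 sscale eta one) -> is_unit_for P one.
Proof.
move=> HP H1 H2 one one0 Done f.
have [Hr Hl] := simple_prod_geometric_unit H1 H2 one0 Done f.
by split=> w; rewrite (pprod_simple HP).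
Qed.

Theorem mainTheorem3 (Sigma : finType) (Sigma_ne : (0 < #|Sigma|)%N)
  (P : prule) (alpha beta gamma : rat) :
  simple_with P alpha beta gamma ->
  ((exists one : series Sigma, is_unit_for P one) <-> (beta, gamma) != (0, 0))
  /\
  ((beta, gamma) != (0, 0) ->
     exists eta : rat,
       (exists one : series Sigma,
          one [::] = 1 /\ forall a : Sigma, delta a one =1 sscale eta one)
       /\
       (forall one : series Sigma,
          one [::] = 1 -> (forall a : Sigma, delta a one =1 sscale eta one) ->
          is_unit_for P one)).
Proof.
move=> HP; have [Hrel _] := HP.
have geometric eta : exists one : series Sigma,
    one [::] = 1 /\ forall a, delta a one =1 sscale eta one.
  by exists (fun w => eta ^+ size w); split=> // a w; apply: exprS.
split; last first.
  case/(simple_unit_param Hrel)=> eta [H1 H2]; exists eta.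
  by split; [apply: geometric | apply: pprod_geometric_unit HP H1 H2].
split=> [[one Hone] | /(simple_unit_param Hrel) [eta [H1 H2]]].
  apply/eqP=> -[beta0 gamma0]; have [a _] := card_gt0P Sigma_ne.
  apply: (simple_prod_no_right_unit (A := alpha) a beta0 gamma0) => f w.
  by rewrite -(pprod_simple HP); apply: (Hone f).1.
have [one [one0 Done]] := geometric eta.
by exists one; apply: (pprod_geometric_unit HP H1 H2).
Qed.
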